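(* Fix an agent $i\in\mathit{Agt}$. For each operator $O\in\{\mathcal{A}_i,\mathcal{R}_i,\mathcal{A}^{\mathsf{real}}_i,\mathcal{R}^{\mathsf{real}}_i\}$ the operator $O$ is not expressible by means of the other modalities of $\mathcal{L}$ (including each other): there exist an atom $p\in\mathit{Atm}$ such that no formula $\varphi\in\mathcal{L}$ in which no operator of the same kind as $O$ occurs (i.e. no $\mathcal{A}_j$ if $O=\mathcal{A}_i$, no $\mathcal{R}_j$ if $O=\mathcal{R}_i$, no $\mathcal{A}^{\mathsf{real}}_j$ if $O=\mathcal{A}^{\mathsf{real}}_i$, no $\mathcal{R}^{\mathsf{real}}_j$ if $O=\mathcal{R}^{\mathsf{real}}_i$, for any agent $j$) satisfies $\models O\,p\leftrightarrow\varphi$.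
   Context: Let $\mathit{Agt}=\{1,\dots,n\}$ be a finite set of agents and $\mathit{Atm}$ a countably infinite set of atoms containing, for each $i\in\mathit{Agt}$, special atoms $\mathsf{rew}_i$ (''$i$ gets a reward'') and $\mathsf{pun}_i$ (''$i$ gets a punishment''). The language $\mathcal{L}_0$ is given by $\alpha::=p\mid\neg\alpha\mid\alpha\wedge\alpha\mid \triangle_i\alpha$ ($p\in\mathit{Atm}$, $i\in\mathit{Agt}$; $\triangle_i\alpha$ = ''$i$ explicitly believes $\alpha$''); $\to,\vee,\leftrightarrow,\top,\bot$ are the usual abbreviations. A state is a tuple $S=((B_i)_{i\in\mathit{Agt}},V)$ with $B_i\subseteq\mathcal{L}_0$ (belief base) and $V\subseteq\mathit{Atm}$; $\mathbf{S}$ is the set of all states. Truth of $\mathcal{L}_0$-formulas: $S\models p$ iff $p\in V$; Boolean clauses as usual; $S\models\triangle_i\alpha$ iff $\alpha\in B_i$. Define $\mathit{Des}_i(S)=\{\alpha\in\mathcal{L}_0:(\alpha\to\mathsf{rew}_i)\in B_i\}$ and $\mathit{Und}_i(S)=\{\alpha\in\mathcal{L}_0:(\alpha\to\mathsf{pun}_i)\in B_i\}$. Relations on $\mathbf{S}$: $S\,\mathcal{E}_i\,S'$ iff $S'\models\alpha$ for all $\alpha\in B_i$ (where $B_i$ is $i$'s base in $S$); $S\,\mathcal{A}_i\,S'$ iff $S'\models\alpha$ for some $\alpha\in\mathit{Des}_i(S)$; $S\,\mathcal{R}_i\,S'$ iff $S'\models\alpha$ for some $\alpha\in\mathit{Und}_i(S)$.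 A model is a pair $(S,U)$ with $S\in U\subseteq\mathbf{S}$. The language $\mathcal{L}$ is $\varphi::=\alpha\mid\neg\varphi\mid\varphi\wedge\varphi\mid\Box_i\varphi\mid\mathcal{A}_i\varphi\mid\mathcal{R}_i\varphi\mid\mathcal{A}^{\mathsf{real}}_i\varphi\mid\mathcal{R}^{\mathsf{real}}_i\varphi$ with $\alpha\in\mathcal{L}_0$. Semantics: $(S,U)\models\alpha$ iff $S\models\alpha$; Boolean clauses as usual; $(S,U)\models\Box_i\varphi$ iff for all $S'\in U$ with $S\mathcal{E}_iS'$, $(S',U)\models\varphi$; $(S,U)\models\mathcal{A}_i\varphi$ iff for all $S'\in U$ with $(S',U)\models\varphi$, $S\mathcal{A}_iS'$; $(S,U)\models\mathcal{R}_i\varphi$ iff for all $S'\in U$ with $(S',U)\models\varphi$, $S\mathcal{R}_iS'$; $(S,U)\models\mathcal{A}^{\mathsf{real}}_i\varphi$ iff for all $S'\in U$ with $(S',U)\models\varphi$ and $S\mathcal{E}_iS'$, $S\mathcal{A}_iS'$; $(S,U)\models\mathcal{R}^{\mathsf{real}}_i\varphi$ iff for all $S'\in U$ with $(S',U)\models\varphi$ and $S\mathcal{E}_iS'$, $S\mathcal{R}_iS'$. A formula is valid ($\models\varphi$) if it is true in every model $(S,U)$. *)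

From mathcomp Require Import all_boot.

Set Implicit Arguments.
Unset Strict Implicit.

Definition agent (n : nat) := 'I_n.

Inductive atom (n : nat) : Type :=
| AOrd : nat -> atom n
| ARew : agent n -> atom n
| APun : agent n -> atom n.

Inductive form0 (n : nat) : Type :=
| F0Atom : atom n -> form0 n
| F0Neg  : form0 n -> form0 n
| F0And  : form0 n -> form0 n -> form0 n
| F0Expl : agent n -> form0 n -> form0 n.

Definition imp0 n (a b : form0 n) : form0 n := F0Neg (F0And a (F0Neg b)).

Record state (n : nat) : Type := mkState {
  base : agent n -> form0 n -> Prop;
  val  : atom n -> Prop
}.

Fixpoint sat0 n (S : state n) (a : form0 n) : Prop :=
  match a with
  | F0Atom p => val S p
  | F0Neg b => ~ sat0 S b
  | F0And b c => sat0 S b /\ sat0 S c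
  | F0Expl i b => base S i b
  end.

Definition Des n (i : agent n) (S : state n) (a : form0 n) : Prop :=
  base S i (imp0 a (F0Atom (ARew i))).
Definition Und n (i : agent n) (S : state n) (a : form0 n) : Prop :=
  base S i (imp0 a (F0Atom (APun i))).

Definition relE n (i : agent n) (S S' : state n) : Prop :=
  forall a, base S i a -> sat0 S' a.
Definition relA n (i : agent n) (S S' : state n) : Prop :=
  exists a, Des i S a /\ sat0 S' a.
Definition relR n (i : agent n) (S S' : state n) : Prop :=
  exists a, Und i S a /\ sat0 S' a.

Inductive form (n : nat) : Type :=
| FBase  : form0 n -> form n
| FNeg   : form n -> form n
| FAnd   : form n -> form n -> form n
| FBox   : agent n -> form n -> form n
| FA     : agent n -> form n -> form n
| FR     : agent n -> form n -> form n
| FAreal : agent n -> form n -> form n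
| FRreal : agent n -> form n -> form n.

Definition fimp n (a b : form n) : form n := FNeg (FAnd a (FNeg b)).
Definition fiff n (a b : form n) : form n := FAnd (fimp a b) (fimp b a).

Fixpoint sat n (U : state n -> Prop) (S : state n) (f : form n) : Prop :=
  match f with
  | FBase a => sat0 S a
  | FNeg g => ~ sat U S g
  | FAnd g h => sat U S g /\ sat U S h
  | FBox i g => forall S', U S' -> relE i S S' -> sat U S' g
  | FA i g => forall S', U S' -> sat U S' g -> relA i S S'
  | FR i g => forall S', U S' -> sat U S' g -> relR i S S'
  | FAreal i g => forall S', U S' -> sat U S' g -> relE i S S' -> relA i S S'
  | FRreal i g => forall S', U S' -> sat U S' g -> relE i S S' -> relR i S S'
  end.

Definition valid n (f : form n) : Prop :=
  forall (U : state n -> Prop) (S : state n), U S -> sat U S f.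

Inductive opkind : Type := KA | KR | KAreal | KRreal.

Definition op n (k : opkind) (i : agent n) (f : form n) : form n :=
  match k with
  | KA => FA i f
  | KR => FR i f
  | KAreal => FAreal i f
  | KRreal => FRreal i f
  end.

Fixpoint free_of n (k : opkind) (f : form n) : Prop :=
  match f with
  | FBase _ => True
  | FNeg g => free_of k g
  | FAnd g h => free_of k g /\ free_of k h
  | FBox _ g => free_of k g
  | FA _ g => k <> KA /\ free_of k g
  | FR _ g => k <> KR /\ free_of k g
  | FAreal _ g => k <> KAreal /\ free_of k g
  | FRreal _ g => k <> KRreal /\ free_of k g
  end.

(* Read contrapositively, each operator is a box: [op k j phi] holds at X iff
   [phi] fails at every [op_rel k j]-successor of X in the model.  Hence
   formulas without operators of kind k are invariant under bisimulations for
   the relations [relE j] and [op_rel k' j], k' <> k, that preserve belief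
   bases and the atoms of the formula.  Adding to a model a state D with empty
   belief bases is such a bisimulation when every visible edge into D from a
   state of the model can be redirected to an empty-base state of the model
   that agrees with D on those atoms.  For each kind there is a model where
   [op k i p] holds at some state but fails once a suitable D is added. *)

From Pilot Require Import Defs.
From mathcomp Require Import all_boot zify.
From Stdlib Require Import Classical.

Set Implicit Arguments.
Unset Strict Implicit.

Section Operators.
Variable n : nat.
Implicit Types (U : state n -> Prop) (X Y : state n) (phi : form n).

Definition op_rel (k : opkind) (j : agent n) X Y : Prop :=
  match k with
  | KA => ~ relA j X Y
  | KR => ~ relR j X Y
  | KAreal => relE j X Y /\ ~ relA j X Y
  | KRreal => relE j X Y /\ ~ relR j X Y
  end.

Lemma sat_op U X k j phi :
  sat U X (op k j phi) <-> forall Y, U Y -> op_rel k j X Y -> ~ sat U Y phi.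
Proof. by case: k; split=> /= H Y /H; move=> *; apply: NNPP; tauto. Qed.

Lemma sat_fiff U X phi psi :
  sat U X (fiff phi psi) <-> (sat U X phi <-> sat U X psi).
Proof. by rewrite /fiff /fimp /=; split=> H; [split=> ?; apply: NNPP | ]; tauto. Qed.

End Operators.

Section Atoms.
Variable n : nat.
Implicit Types (phi : form n).

Fixpoint atoms0_in (P : atom n -> Prop) (a : form0 n) : Prop :=
  match a with
  | F0Atom p => P p
  | F0Neg b => atoms0_in P b
  | F0And b c => atoms0_in P b /\ atoms0_in P c
  | F0Expl _ _ => True
  end.

Fixpoint atoms_in (P : atom n -> Prop) phi : Prop :=
  match phi with
  | FBase a => atoms0_in P a
  | FNeg g | FBox _ g | FA _ g | FR _ g | FAreal _ g | FRreal _ g => atoms_in P g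
  | FAnd g h => atoms_in P g /\ atoms_in P h
  end.

Lemma atoms0_in_mono (P Q : atom n -> Prop) a :
  (forall p, P p -> Q p) -> atoms0_in P a -> atoms0_in Q a.
Proof.
move=> PQ; elim: a => [p|b IHb|b IHb c IHc|j b _] //=; first exact: PQ.
by case=> /IHb ? /IHc ?.
Qed.

Lemma atoms_in_mono (P Q : atom n -> Prop) phi :
  (forall p, P p -> Q p) -> atoms_in P phi -> atoms_in Q phi.
Proof.
move=> PQ; elim: phi => [a|g IHg|g IHg h IHh|j g IHg|j g IHg|j g IHg|j g IHg|j g IHg] //=.
  exact: atoms0_in_mono.
by case=> /IHg ? /IHh ?.
Qed.

Definition below (B : nat) (a : atom n) : Prop :=
  if a is AOrd m then m <= B else True.

Lemma below_mono B B' : B <= B' -> forall a, below B a -> below B' a.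
Proof. by move=> BB' [m|//|//] /=; lia. Qed.

Fixpoint max_atom0 (a : form0 n) : nat :=
  match a with
  | F0Atom (AOrd m) => m
  | F0Atom _ | F0Expl _ _ => 0
  | F0Neg b => max_atom0 b
  | F0And b c => maxn (max_atom0 b) (max_atom0 c)
  end.

Fixpoint max_atom phi : nat :=
  match phi with
  | FBase a => max_atom0 a
  | FNeg g | FBox _ g | FA _ g | FR _ g | FAreal _ g | FRreal _ g => max_atom g
  | FAnd g h => maxn (max_atom g) (max_atom h)
  end.

Lemma atoms0_in_below_max a : atoms0_in (below (max_atom0 a)) a.
Proof.
elim: a => [[m| |]|b|b IHb c IHc|] //=.
by split; [apply: atoms0_in_mono IHb | apply: atoms0_in_mono IHc];
  apply: below_mono; rewrite ?leq_maxl ?leq_maxr.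
Qed.

Lemma atoms_in_below_max phi : atoms_in (below (max_atom phi)) phi.
Proof.
elim: phi => [|g|g IHg h IHh|j g|j g|j g|j g|j g] //=; first exact: atoms0_in_below_max.
by split; [apply: atoms_in_mono IHg | apply: atoms_in_mono IHh];
  apply: below_mono; rewrite ?leq_maxl ?leq_maxr.
Qed.

End Atoms.

Section Bisimulation.
Variable n : nat.
Implicit Types (U : state n -> Prop) (X Y : state n) (phi : form n).

Definition agree (P : atom n -> Prop) X Y : Prop :=
  (forall a, P a -> (Defs.val X a <-> Defs.val Y a)) /\
  (forall j a, base X j a <-> base Y j a).

Lemma sat0_agree P X Y a : agree P X Y -> atoms0_in P a -> (sat0 X a <-> sat0 Y a).
Proof.
case=> agree_val agree_base; elim: a => [p|b IHb|b IHb c IHc|j b _] /=.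
- exact: agree_val.
- by move/IHb; tauto.
- by case=> /IHb ? /IHc ?; tauto.
- by move=> _; apply: agree_base.
Qed.

Definition zigzag U1 U2 (Z Rel : state n -> state n -> Prop) : Prop :=
  forall X Y, Z X Y ->
    (forall X', U1 X' -> Rel X X' -> exists Y', [/\ U2 Y', Z X' Y' & Rel Y Y']) /\
    (forall Y', U2 Y' -> Rel Y Y' -> exists X', [/\ U1 X', Z X' Y' & Rel X X']).

Lemma box_zigzag U1 U2 Z Rel (Q1 Q2 : state n -> Prop) X Y :
  zigzag U1 U2 Z Rel -> (forall X' Y', Z X' Y' -> (Q1 X' <-> Q2 Y')) -> Z X Y ->
  (forall X', U1 X' -> Rel X X' -> Q1 X') <-> (forall Y', U2 Y' -> Rel Y Y' -> Q2 Y').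
Proof.
move=> zz Q12 /zz[forth back]; split=> box.
- move=> Y' U2Y' /(back _ U2Y')[X' [U1X' ZXY' RXX']].
  by apply/(Q12 _ _ ZXY')/box.
- move=> X' U1X' /(forth _ U1X')[Y' [U2Y' ZXY' RYY']].
  by apply/(Q12 _ _ ZXY')/box.
Qed.

Section Invariance.
Variables (k : opkind) (P : atom n -> Prop) (U1 U2 : state n -> Prop).
Variable Z : state n -> state n -> Prop.
Hypothesis agree_Z : forall X Y, Z X Y -> agree P X Y.
Hypothesis zigzag_relE : forall j, zigzag U1 U2 Z (relE j).
Hypothesis zigzag_op_rel : forall k' j, k <> k' -> zigzag U1 U2 Z (op_rel k' j).

Lemma sat_op_bisim k' j phi : k <> k' ->
  (forall X Y, Z X Y -> (sat U1 X phi <-> sat U2 Y phi)) ->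
  forall X Y, Z X Y -> (sat U1 X (op k' j phi) <-> sat U2 Y (op k' j phi)).
Proof.
move=> kk' IH X Y ZXY; rewrite !sat_op.
apply: (box_zigzag (Q1 := fun X => ~ sat U1 X phi) (Q2 := fun Y => ~ sat U2 Y phi))
  (zigzag_op_rel j kk') _ ZXY => X' Y' /IH; tauto.
Qed.

Lemma sat_bisim phi : free_of k phi -> atoms_in P phi ->
  forall X Y, Z X Y -> (sat U1 X phi <-> sat U2 Y phi).
Proof.
elim: phi => [a|g IH|g IHg h IHh|j g IH|j g IH|j g IH|j g IH|j g IH] /=.
- by move=> _ Pa X Y /agree_Z /sat0_agree; apply.
- by move=> fg Pg X Y /(IH fg Pg); tauto.
- by case=> fg fh [Pg Ph] X Y ZXY; move: (IHg fg Pg X Y ZXY) (IHh fh Ph X Y ZXY); tauto.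
- move=> fg Pg X Y; apply: (box_zigzag (Q1 := fun X => sat U1 X g) (Q2 := fun Y => sat U2 Y g))
    (zigzag_relE j) _ => X' Y'; exact: IH.
- by case=> kk' fg Pg; apply: (sat_op_bisim (k' := KA)) (IH fg Pg).
- by case=> kk' fg Pg; apply: (sat_op_bisim (k' := KR)) (IH fg Pg).
- by case=> kk' fg Pg; apply: (sat_op_bisim (k' := KAreal)) (IH fg Pg).
- by case=> kk' fg Pg; apply: (sat_op_bisim (k' := KRreal)) (IH fg Pg).
Qed.

End Invariance.

End Bisimulation.

Section TrivialStates.
Variable n : nat.
Implicit Types (U : state n -> Prop) (X Y : state n) (phi : form n).

Definition trivial X : Prop := forall j a, ~ base X j a.

Lemma relE_trivial j X Y : trivial X -> relE j X Y.
Proof. by move=> tX a /tX. Qed.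

Lemma op_rel_trivial k j X Y : trivial X -> op_rel k j X Y.
Proof.
move=> tX; have nA : ~ relA j X Y by case=> a [/tX].
have nR : ~ relR j X Y by case=> a [/tX].
by case: k => //=; split=> //; apply: relE_trivial.
Qed.

Definition add_state U D : state n -> Prop := fun Y => U Y \/ Y = D.

Section AddTrivialState.
Variables (k : opkind) (P : atom n -> Prop) (U : state n -> Prop) (D : state n).
Hypothesis trivial_D : trivial D.
Hypothesis agree_D :
  forall X, U X -> trivial X -> forall a, P a -> (Defs.val X a <-> Defs.val D a).

Definition covered (Rel : state n -> state n -> Prop) : Prop :=
  forall X, U X -> ~ trivial X -> Rel X D -> exists X', [/\ U X', trivial X' & Rel X X'].

Hypothesis covered_relE : forall j, covered (relE j).
Hypothesis covered_op_rel : forall k' j, k <> k' -> covered (op_rel k' j).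

Let twin X Y := U X /\ (Y = X \/ trivial X /\ Y = D).

Lemma zigzag_twin Rel : (forall X Y, trivial X -> Rel X Y) -> covered Rel ->
  zigzag U (add_state U D) twin Rel.
Proof.
move=> full cov X Y [UX [->|[tX ->]]]; split.
- by move=> X' UX' RXX'; exists X'; split; [left | split; [|left] |].
- move=> Y' [UY'|->] RXY'.
    by exists Y'; split=> //; split; [|left].
  have [tX|ntX] := classic (trivial X).
    by exists X; split=> //; [split; [|right] | apply: full].
  have [X' [UX' tX' RXX']] := cov _ UX ntX RXY'.
  by exists X'; split=> //; split; [|right].
- by move=> X' UX' _; exists X'; split; [left | split; [|left] | apply: full].
- move=> Y' [UY'|->] _.
    by exists Y'; split=> //; [split; [|left] | apply: full].
  by exists X; split=> //; [split; [|right] | apply: full].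
Qed.

Lemma sat_add_state phi X : free_of k phi -> atoms_in P phi -> U X ->
  (sat U X phi <-> sat (add_state U D) X phi).
Proof.
move=> fphi Pphi UX; apply: (sat_bisim (Z := twin)) fphi Pphi _ _ (conj UX (or_introl erefl)).
- move=> X' Y' [UX' [->|[tX' ->]]]; first by split.
  by split=> [|j a]; [apply: agree_D | split=> [/tX'|/trivial_D]].
- by move=> j; apply: zigzag_twin => // *; apply: relE_trivial.
- by move=> k' j kk'; apply: zigzag_twin => [*|]; [apply: op_rel_trivial | apply: covered_op_rel].
Qed.

Lemma add_state_not_valid phi O X : free_of k phi -> atoms_in P phi -> U X ->
  sat U X O -> ~ sat (add_state U D) X O -> ~ valid (fiff O phi).
Proof.
move=> fphi Pphi UX O_U O_UD valid_iff.
have /sat_fiff := valid_iff U X UX.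
have /sat_fiff := valid_iff (add_state U D) X (or_introl UX).
have := sat_add_state fphi Pphi UX; tauto.
Qed.

End AddTrivialState.

End TrivialStates.

Section Incentives.
Variable n : nat.
Implicit Types (X Y : state n).

Definition target (c : bool) (j : agent n) : atom n := if c then ARew j else APun j.

Definition incentive_state (c : bool) (x y : atom n) : state n :=
  mkState (fun j a => a = imp0 (F0Atom x) (F0Atom (target c j)) \/ a = F0Neg (F0Atom y))
          (fun _ => False).

Definition blank (v : atom n -> Prop) : state n := mkState (fun _ _ => False) v.

Lemma trivial_blank v : trivial (blank v).
Proof. by move=> j a. Qed.

Lemma incentive_nontrivial (j : agent n) c x y : ~ trivial (incentive_state c x y).
Proof. by move/(_ j (F0Neg (F0Atom y))); apply; right. Qed.

Lemma relE_incentive j c x y Y :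
  relE j (incentive_state c x y) Y <->
  ~ (Defs.val Y x /\ ~ Defs.val Y (target c j)) /\ ~ Defs.val Y y.
Proof.
split=> [E | [Ex Ey] a [->|->] //].
by split; [exact: (E _ (or_introl erefl)) | exact: (E _ (or_intror erefl))].
Qed.

Lemma relA_incentive j c x y Y : relA j (incentive_state c x y) Y <-> c /\ Defs.val Y x.
Proof.
split=> [[a [[[-> E]|//] Yx]] | [c_true Yx]]; first by case: c E.
by exists (F0Atom x); split; [left; rewrite c_true|].
Qed.

Lemma relR_incentive j c x y Y : relR j (incentive_state c x y) Y <-> ~~ c /\ Defs.val Y x.
Proof.
split=> [[a [[[-> E]|//] Yx]] | [c_false Yx]]; first by case: c E.
by exists (F0Atom x); split; [left; move/negbTE: c_false => ->|].
Qed.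

End Incentives.

Section Models.
Variables (n : nat) (i : agent n) (c : bool).

Local Ltac incentive_simpl :=
  rewrite /= ?relE_incentive ?relA_incentive ?relR_incentive /=; case: (c);
  rewrite /is_true /=; intuition congruence.

Section PlainModel.
Variable p : atom n.

(* Of the relations [relE j] and [op_rel k' j], only [op_rel k j] with [k] the
   kind of the operator links [S] to the [p]-state [D]. *)
Let S := incentive_state c p p.
Let D := blank (fun a => a = p).

Lemma op_rel_plain_model k j : op_rel k j S D <-> k = if c then KR else KA.
Proof. by case: k; incentive_simpl. Qed.

Lemma plain_undefinable phi :
  free_of (if c then KR else KA) phi ->
  ~ valid (fiff (op (if c then KR else KA) i (FBase (F0Atom p))) phi).
Proof.
move=> free_phi.
apply: (add_state_not_valid (P := fun _ => True) (U := fun X => X = S) (D := D) _ _ _ _ free_phi).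
- exact: trivial_blank.
- by move=> X -> /(incentive_nontrivial i).
- by move=> j X -> _ /relE_incentive[_ []].
- by move=> k' j kk' X -> _ /op_rel_plain_model /esym /kk'.
- exact: atoms_in_mono (atoms_in_below_max phi).
- by [].
- by rewrite sat_op => Y -> _ [].
- by rewrite sat_op => /(_ D (or_intror erefl) (proj2 (op_rel_plain_model _ _) erefl)); apply.
Qed.

End PlainModel.

Section RealModel.
Variables (q r : nat).
Hypothesis q_neq_r : q <> r.

(* [q] and [r] are fresh for the formula.  [Tq] is an [relE]-successor of [S]
   satisfying the desired (resp. undesirable) atom [q]; [Tr] violates the
   belief [~ r].  The added [D] is an [relE]-successor outside [q], which
   falsifies [op k i p] at [S]; it is matched by [Tq] for [relE] and the
   relation of the other real operator, and by [Tr] for the plain ones. *)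
Let S := incentive_state c (AOrd n q) (AOrd n r).
Let Tq := blank (fun a => a <> AOrd n r).
Let Tr := blank (fun a => a <> AOrd n q).
Let D := blank (fun a => a <> AOrd n q /\ a <> AOrd n r).
Let U X := X = S \/ X = Tq \/ X = Tr.

Lemma relE_Tq j : relE j S Tq.
Proof. by incentive_simpl. Qed.

Lemma op_rel_Tq k j :
  op_rel k j S Tq <-> if c then k = KR \/ k = KRreal else k = KA \/ k = KAreal.
Proof. by case: k; incentive_simpl. Qed.

Lemma op_rel_Tr k j : op_rel k j S Tr <-> k = KA \/ k = KR.
Proof. by case: k; incentive_simpl. Qed.

Lemma op_rel_D k j : op_rel k j S D.
Proof. by case: k; incentive_simpl. Qed.

Lemma covered_real_model k' j : (if c then KAreal else KRreal) <> k' ->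
  covered U D (op_rel k' j).
Proof.
move=> kk' X [->|[->|->]] ntX; try by case: ntX; apply: trivial_blank.
have [opTq|opTr] : op_rel k' j S Tq \/ op_rel k' j S Tr.
  by rewrite op_rel_Tq op_rel_Tr; case: (c) k' kk' => -[]; tauto.
- by exists Tq; split; [right; left | exact: trivial_blank |].
- by exists Tr; split; [right; right | exact: trivial_blank |].
Qed.

Lemma real_undefinable (p : atom n) phi :
  p <> AOrd n q -> p <> AOrd n r ->
  atoms_in (fun a => a <> AOrd n q /\ a <> AOrd n r) phi ->
  free_of (if c then KAreal else KRreal) phi ->
  ~ valid (fiff (op (if c then KAreal else KRreal) i (FBase (F0Atom p))) phi).
Proof.
move=> pq pr fresh_phi free_phi.
apply: (add_state_not_valid (P := fun a => a <> AOrd n q /\ a <> AOrd n r) (U := U) (D := D)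
  _ _ _ covered_real_model free_phi fresh_phi).
- exact: trivial_blank.
- by move=> X [->|[->|->]]; [move/(incentive_nontrivial i) | move=> _ a [] | move=> _ a []].
- move=> j X [->|[->|->]] ntX; try by case: ntX; apply: trivial_blank.
  by exists Tq; split; [right; left | exact: trivial_blank | exact: relE_Tq].
- by left.
- rewrite sat_op => Y [->|[->|->]].
  + by move=> _ [].
  + by move/op_rel_Tq; case: (c) => -[].
  + by case/op_rel_Tr; case: (c).
- by rewrite sat_op => /(_ D (or_intror erefl) (op_rel_D _ _)); apply.
Qed.

End RealModel.

End Models.

Theorem theorem1 (n : nat) (i : agent n) (k : opkind) :
  exists p : atom n,
    forall phi : form n, free_of k phi ->
      ~ valid (fiff (op k i (FBase (F0Atom p))) phi).
Proof.
exists (AOrd n 0) => phi; set B := max_atom phi.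
have fresh : atoms_in (fun a => a <> AOrd n B.+1 /\ a <> AOrd n B.+2) phi.
  by apply: atoms_in_mono (atoms_in_below_max phi) => -[m|//|//] /= mB; split=> -[]; lia.
case: k => free_phi.
- exact: (plain_undefinable (c := false)).
- exact: (plain_undefinable (c := true)).
- by apply: (real_undefinable (c := true)) fresh free_phi => // -[]; lia.
- by apply: (real_undefinable (c := false)) fresh free_phi => // -[]; lia.
Qed.
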